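(* Let $n \ge 19$. Let $H$ be a red-blue colouring of $K_n$ satisfying $\mathrm{pack}(H) \le n(n-1)/4$. Suppose that $\{X_1, X_2\}$ is a bipartition of $V(H)$ such that the number $k$ of blue edges with both ends in $X_1$ or both ends in $X_2$ satisfies $k \le n/8$. Then (a) $|X_i| \ge k + 4$ for $i \in [2]$, and (b) $|X_i| \ge 7$ for $i \in [2]$.
   Context: A red-blue colouring $H$ of $K_n$ assigns red or blue to each edge of the complete graph on the $n$-vertex set $V(H)$; $H_R, H_B$ are the spanning subgraphs of red and blue edges. For a graph $F$, a fractional triangle packing is a function $\omega$ from the triangles of $F$ to $[0,1]$ with $\sum_{T \ni e}\omega(T) \le 1$ for every edge $e$; $\nu^*(F)$ is the maximum of $\sum_T\omega(T)$; $\mathrm{pack}(H) = 3(\nu^*(H_R)+\nu^*(H_B))$. *)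

From HB Require Import structures.
From mathcomp Require Import all_boot all_order all_algebra.
From mathcomp Require Import classical_sets reals.
Set Implicit Arguments. Unset Strict Implicit. Unset Printing Implicit Defensive.
Import Order.TTheory GRing.Theory Num.Theory.
Local Open Scope ring_scope.
Local Open Scope classical_set_scope.

(* Vertices are 'I_n; an edge is a 2-element subset of 'I_n.
   A graph F on 'I_n is given by its edge set E : {set {set 'I_n}}. *)

Definition is_edge (n : nat) (e : {set 'I_n}) : bool := #|e| == 2%N.

Definition is_triangle (n : nat) (E : {set {set 'I_n}}) (T : {set 'I_n}) : bool :=
  (#|T| == 3%N) && [forall e : {set 'I_n}, (e \subset T) && is_edge e ==> (e \in E)].

Definition frac_tri_packing (R : realType) (n : nat) (E : {set {set 'I_n}})
    (w : {set 'I_n} -> R) : Prop :=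
  (forall T, is_triangle E T -> 0 <= w T <= 1) /\
  (forall e, e \in E -> \sum_(T | is_triangle E T && (e \subset T)) w T <= 1).

Definition packing_value (R : realType) (n : nat) (E : {set {set 'I_n}})
    (w : {set 'I_n} -> R) : R :=
  \sum_(T | is_triangle E T) w T.

(* nu^*(F): maximum (= supremum, the LP being bounded and feasible) *)
Definition nu_star (R : realType) (n : nat) (E : {set {set 'I_n}}) : R :=
  sup [set x : R | exists w : {set 'I_n} -> R,
                     frac_tri_packing E w /\ x = packing_value E w].

Definition red_edges (n : nat) (col : {set 'I_n} -> bool) : {set {set 'I_n}} :=
  [set e | is_edge e && col e].
Definition blue_edges (n : nat) (col : {set 'I_n} -> bool) : {set {set 'I_n}} :=
  [set e | is_edge e && ~~ col e].

Definition pack (R : realType) (n : nat) (col : {set 'I_n} -> bool) : R :=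
  3%:R * (nu_star R (red_edges col) + nu_star R (blue_edges col)).

Definition blue_inside (n : nat) (col : {set 'I_n} -> bool) (X1 X2 : {set 'I_n}) : nat :=
  #|[set e in blue_edges col | (e \subset X1) || (e \subset X2)]|.

From HB Require Import structures.
From mathcomp Require Import classical_sets reals.
From mathcomp Require Import all_boot all_order all_algebra.
From mathcomp Require Import zify lra.
Import Order.TTheory GRing.Theory Num.Theory.

Set Implicit Arguments.
Unset Strict Implicit.

(* Give each red triangle inside a part [X_i] the weight [1 / (|X_i| - 2)]: an edge lies in
   at most [|X_i| - 2] triangles of [X_i], so this is a fractional red triangle packing.
   A triple of [X_i] that is not a red triangle contains one of the [k_i] blue edges inside
   [X_i], and each such edge lies in at most [|X_i| - 2] triples, so the packing has weight
   at least [C(|X_i|, 3) / (|X_i| - 2) - k_i = |X_i| (|X_i| - 1) / 6 - k_i] inside [X_i].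
   Hence [n (n - 1) / 4 >= pack(H) >= sum_i |X_i| (|X_i| - 1) / 2 - 3 k], which says
   [(|X_1| - |X_2|)^2 <= n + 12 k] when both parts have at least three vertices and is violated
   outright when a part has at most two.  With [k <= n / 8] and [n >= 19] this forces both
   parts to have at least [max (7, k + 4)] vertices. *)

Definition triangles_in n (E : {set {set 'I_n}}) (X : {set 'I_n}) : {set {set 'I_n}} :=
  [set T | is_triangle E T && (T \subset X)].

Definition edges_in n (E : {set {set 'I_n}}) (X : {set 'I_n}) : {set {set 'I_n}} :=
  [set e in E | e \subset X].

Lemma leq_card_bigcup (I T : finType) (P : {pred I}) (F : I -> {set T}) :
  #|\bigcup_(i in P) F i| <= \sum_(i in P) #|F i|.
Proof.
elim/big_ind2: _ => [|m A p B leAm leBp|//]; first by rewrite cards0.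
by rewrite (leq_trans (leq_card_setU A B)) ?leq_add.
Qed.

Section TripleCounting.
Variable n : nat.
Implicit Types (X e T : {set 'I_n}) (E : {set {set 'I_n}}).

Lemma card_triples_through_pair X e : #|e| = 2 ->
  #|[set T : {set 'I_n} | [&& T \subset X, #|T| == 3 & e \subset T]]| <= #|X| - 2.
Proof.
move=> e2; have [eX|eX] := boolP (e \subset X); last first.
  rewrite (_ : [set T : {set 'I_n} | _] = set0) ?cards0 //; apply/setP => T; rewrite !inE.
  by apply/and3P => -[TX _ eT]; rewrite (subset_trans eT TX) in eX.
have -> : #|X| - 2 = #|X :\: e| by rewrite cardsD (setIidPr eX) e2.
apply: leq_trans (leq_imset_card (fun x => x |: e) (X :\: e)).
apply/subset_leq_card/subsetP => T; rewrite inE => /and3P[TX /eqP T3 eT].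
have /cards1P[x Te] : #|T :\: e| == 1 by rewrite cardsD (setIidPr eT) T3 e2.
have xT : x \in T :\: e by rewrite Te set11.
apply/imsetP; exists x; first by move: xT; rewrite !inE => /andP[-> /(subsetP TX)].
by rewrite -(setID T e) (setIidPr eT) Te setUC.
Qed.

Lemma card_triangles_through_edge E X e : #|e| = 2 ->
  #|[set T : {set 'I_n} | is_triangle E T && (e \subset T) && (T \subset X)]| <= #|X| - 2.
Proof.
move=> e2; apply: leq_trans (card_triples_through_pair X e2).
apply/subset_leq_card/subsetP => T; rewrite !inE.
by case/andP => /andP[/andP[-> _] ->] ->.
Qed.

Lemma triples_le_red_triangles_blue_edges (col : {set 'I_n} -> bool) X :
  'C(#|X|, 3) <= #|triangles_in (red_edges col) X|
                 + #|edges_in (blue_edges col) X| * (#|X| - 2).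
Proof.
pose through e := [set T : {set 'I_n} | [&& T \subset X, #|T| == 3 & e \subset T]].
have cover : [set T : {set 'I_n} | T \subset X & #|T| == 3] \subset
    triangles_in (red_edges col) X :|: \bigcup_(e in edges_in (blue_edges col) X) through e.
  apply/subsetP => T; rewrite inE => /andP[TX T3]; rewrite !inE.
  have [red|] := boolP (is_triangle (red_edges col) T); first by apply/orP; left; apply/andP.
  rewrite /is_triangle T3 negb_forall => /existsP[e].
  rewrite negb_imply => /andP[/andP[eT e2] eNred].
  apply/orP; right; apply/bigcupP; exists e; last by rewrite inE TX T3 eT.
  by move: eNred; rewrite !inE e2 (subset_trans eT TX) andbT.
rewrite -cards_draws (leq_trans (subset_leq_card cover)) //.
rewrite (leq_trans (leq_card_setU _ _)) // leq_add2l.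
rewrite (leq_trans (leq_card_bigcup _ _)) // -sum_nat_const leq_sum // => e.
by rewrite !inE => /andP[/andP[/eqP e2 _] _]; apply: card_triples_through_pair.
Qed.

Lemma card_edges_in_parts (col : {set 'I_n} -> bool) X1 X2 : [disjoint X1 & X2] ->
  #|edges_in (blue_edges col) X1| + #|edges_in (blue_edges col) X2|
    = blue_inside col X1 X2.
Proof.
move=> X12; rewrite -cardsUI (_ : _ :&: _ = set0) ?cards0 ?addn0.
  by rewrite /blue_inside; apply: eq_card => e; rewrite !inE andb_orr.
apply/setP => e; rewrite !inE; apply/negbTE/negP.
case/andP => /andP[/andP[/eqP e2 _] e1] /andP[_ e2'].
by move: e2'; apply/negP/(subsetC_disjoint X12 _ e1); rewrite -card_gt0 e2.
Qed.

End TripleCounting.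

(* [12 * 'C(m, 3) / (m - 2)]; a part without triples contributes nothing. *)
Definition part_lower_bound (m : nat) : nat := if 3 <= m then 2 * m * (m - 1) else 0.

Lemma sq_gap_le a b k :
  2 * a * (a - 1) + 2 * b * (b - 1) <= (a + b) * (a + b - 1) + 12 * k ->
  (b - a) * (b - a) <= a + b + 12 * k.
Proof.
have [/eqP -> // | /ltnW /subnKC <-] := leqP b a.
rewrite addKn; move: (b - a) => d.
by case: a => [|a]; case: d => [|d] /=; rewrite ?subn1 /=; nia.
Qed.

Lemma smaller_part_bounds a d k : 19 <= 2 * a + d -> 8 * k <= 2 * a + d ->
  d * d <= 2 * a + d + 12 * k -> k + 4 <= a /\ 7 <= a.
Proof.
move=> n19 k_le gap.
have a7 : 7 <= a.
  have [//|a_lt7] := leqP 7 a.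
  have : 7 * d <= d * d by rewrite leq_mul2r; lia.
  lia.
split=> //; have [//|a_lt] := leqP (k + 4) a.
have : 18 * d <= d * d by rewrite leq_mul2r; lia.
lia.
Qed.

Lemma no_tiny_part a b k : a <= 2 -> 17 <= b -> 8 * k <= a + b ->
  2 * b * (b - 1) <= (a + b) * (a + b - 1) + 12 * k -> False.
Proof. move=> *; nia. Qed.

Lemma part_size_bounds n a b k : 19 <= n -> a + b = n -> 8 * k <= n ->
  part_lower_bound a + part_lower_bound b <= n * (n - 1) + 12 * k ->
  k + 4 <= a /\ 7 <= a.
Proof.
move=> n19 ab k_le; subst n; rewrite /part_lower_bound.
have [a3|a2] := leqP 3 a; have [b3|b2] := leqP 3 b; rewrite ?add0n ?addn0 => bound.
- have [ab|ba] := leqP a b; last by clear bound; lia.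
  have := @smaller_part_bounds a (b - a) k.
  have := sq_gap_le bound; clear bound; lia.
- lia.
- by case: (@no_tiny_part a b k); lia.
- lia.
Qed.

Local Open Scope ring_scope.

Lemma natr_div_le1 (R : numFieldType) (a c : nat) : (a <= c)%N -> a%:R / c%:R <= 1 :> R.
Proof.
case: c => [|c] ac; first by rewrite invr0 mulr0 ler01.
by rewrite ler_pdivrMr ?ltr0Sn // mul1r ler_nat.
Qed.

Lemma natr_sum_indicator (R : pzSemiRingType) (I : finType) (P Q : pred I) :
  \sum_(i | P i) (Q i)%:R = #|[set i | P i && Q i]|%:R :> R.
Proof.
rewrite -sum1dep_card big_mkcondr natr_sum; apply: eq_bigr => i _.
by case: (Q i).
Qed.

Section FractionalPacking.
Variables (R : realType) (n : nat).
Implicit Types (X e T : {set 'I_n}) (E : {set {set 'I_n}}).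

Lemma packing_value_le_nu_star E w : frac_tri_packing E w -> packing_value E w <= nu_star R E.
Proof.
move=> packw; apply: ub_le_sup; last by exists w.
exists #|[set T | is_triangle E T]|%:R => _ [v [[v01 _] ->]].
rewrite /packing_value -sum1dep_card natr_sum ler_sum // => T triT.
by case/andP: (v01 T triT).
Qed.

Lemma nu_star_ge0 E : 0 <= nu_star R E.
Proof.
have zero_packing : frac_tri_packing E (fun _ => 0 : R).
  by split=> [T _ | e _]; rewrite ?big1 ?lexx ?ler01.
by have := packing_value_le_nu_star zero_packing; rewrite /packing_value big1.
Qed.

(* No triangle lies inside [X] when [#|X| <= 2], so the truncated [#|X| - 2] and the
   division by [0] are harmless. *)
Definition inside_weight X T : R := (T \subset X)%:R / (#|X| - 2)%:R.

Lemma inside_weight_ge0 X T : 0 <= inside_weight X T.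
Proof. by rewrite divr_ge0 ?ler0n. Qed.

Lemma inside_weight_out X T : ~~ (T \subset X) -> inside_weight X T = 0.
Proof. by move/negbTE; rewrite /inside_weight => ->; rewrite mul0r. Qed.

Lemma inside_weight_le1 X T : #|T| = 3%N -> inside_weight X T <= 1.
Proof.
move=> T3; have [TX|TnX] := boolP (T \subset X); last by rewrite inside_weight_out ?ler01.
by apply: natr_div_le1; have := subset_leq_card TX; rewrite T3; lia.
Qed.

Lemma edge_load_inside_weight E X e : #|e| = 2%N ->
  \sum_(T | is_triangle E T && (e \subset T)) inside_weight X T <= 1.
Proof.
move=> e2; rewrite -mulr_suml natr_sum_indicator.
exact/natr_div_le1/card_triangles_through_edge.
Qed.

Lemma edge_load_inside_weight_out E X e : ~~ (e \subset X) ->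
  \sum_(T | is_triangle E T && (e \subset T)) inside_weight X T = 0.
Proof.
move=> eX; apply: big1 => T /andP[_ eT]; apply: inside_weight_out.
by apply: contra eX; apply: subset_trans.
Qed.

Definition part_weight X1 X2 T : R := inside_weight X1 T + inside_weight X2 T.

Lemma part_weight_packing E X1 X2 : {in E, forall e, #|e| = 2%N} -> [disjoint X1 & X2] ->
  frac_tri_packing E (part_weight X1 X2).
Proof.
move=> E2 X12; split=> [T /andP[/eqP T3 _] | e /E2 e2].
  rewrite addr_ge0 ?inside_weight_ge0 //=.
  have T0 : T != set0 by rewrite -card_gt0 T3.
  have [TX1|TnX1] := boolP (T \subset X1).
    rewrite /part_weight (inside_weight_out (subsetC_disjoint X12 T0 TX1)).
    by rewrite addr0 inside_weight_le1.
  by rewrite /part_weight inside_weight_out // add0r inside_weight_le1.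
rewrite big_split /=.
have [eX1|eNX1] := boolP (e \subset X1).
  have eNX2 : ~~ (e \subset X2) by rewrite (subsetC_disjoint X12) // -card_gt0 e2.
  by rewrite [X in _ + X]edge_load_inside_weight_out // addr0 edge_load_inside_weight.
by rewrite edge_load_inside_weight_out // add0r edge_load_inside_weight.
Qed.

Lemma packing_value_part_weight E X1 X2 :
  packing_value E (part_weight X1 X2) =
    #|triangles_in E X1|%:R / (#|X1| - 2)%:R + #|triangles_in E X2|%:R / (#|X2| - 2)%:R.
Proof. by rewrite /packing_value big_split /= -!mulr_suml !natr_sum_indicator. Qed.

Lemma part_lower_bound_le (col : {set 'I_n} -> bool) X :
  (part_lower_bound #|X|)%:R <=
    12 * (#|triangles_in (red_edges col) X|%:R / (#|X| - 2)%:R)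
    + 12 * #|edges_in (blue_edges col) X|%:R :> R.
Proof.
rewrite /part_lower_bound; case: ifP => [X3|_]; last first.
  by rewrite addr_ge0 ?mulr_ge0 ?invr_ge0 ?ler0n.
have count := triples_le_red_triangles_blue_edges col X.
set m := #|X| in X3 count *; set N := #|triangles_in _ _|; set k := #|edges_in _ _|.
have c_gt0 : 0 < (m - 2)%:R :> R by rewrite ltr0n subn_gt0.
have triples : ('C(m, 3) * 6 = m * (m - 1) * (m - 2))%N.
  by rewrite (bin_ffact m 3) !ffactnS ffactn0 muln1 mulnA -!subn1 -subnDA.
have : (2 * (m * (m - 1) * (m - 2)) <= 12 * N + 12 * k * (m - 2))%N.
  by rewrite -triples; lia.
rewrite -(ler_nat R) !natrD !natrM => bound.
have NE : N%:R / (m - 2)%:R * (m - 2)%:R = N%:R :> R by rewrite divfK ?gt_eqF.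
nra.
Qed.

Lemma part_lower_bounds_le_pack (col : {set 'I_n} -> bool) X1 X2 : [disjoint X1 & X2] ->
  (part_lower_bound #|X1| + part_lower_bound #|X2|)%:R
    <= 4 * pack R col + (12 * blue_inside col X1 X2)%:R.
Proof.
move=> X12.
have red2 : {in red_edges col, forall e, #|e| = 2%N} by move=> e; rewrite inE => /andP[/eqP].
have red_value := packing_value_le_nu_star (part_weight_packing red2 X12).
rewrite packing_value_part_weight in red_value.
have blue_ge0 := nu_star_ge0 (blue_edges col).
have bound1 := part_lower_bound_le col X1; have bound2 := part_lower_bound_le col X2.
rewrite /pack -(card_edges_in_parts col X12) natrM natrD !natrD in bound1 bound2 *.
lra.
Qed.

End FractionalPacking.

Unset Implicit Arguments.

Theorem proposition4p1 (R : realType) (n : nat) (col : {set 'I_n} -> bool)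
    (X1 X2 : {set 'I_n}) :
  (19 <= n)%N ->
  pack R col <= (n * (n - 1))%:R / 4%:R ->
  X1 != finset.set0 -> X2 != finset.set0 ->
  X1 :&: X2 = finset.set0 -> X1 :|: X2 = [set: 'I_n] ->
  (8 * blue_inside col X1 X2 <= n)%N ->
  ((blue_inside col X1 X2 + 4 <= #|X1|)%N /\ (blue_inside col X1 X2 + 4 <= #|X2|)%N) /\
  ((7 <= #|X1|)%N /\ (7 <= #|X2|)%N).
Proof.
move=> n19 pack_le _ _ X1X2 cover k_le.
have disj : [disjoint X1 & X2] by rewrite -setI_eq0 X1X2.
have card_n : (#|X1| + #|X2| = n)%N.
  by rewrite -cardsUI X1X2 cards0 addn0 cover cardsT card_ord.
have bound : (part_lower_bound #|X1| + part_lower_bound #|X2|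
               <= n * (n - 1) + 12 * blue_inside col X1 X2)%N.
  rewrite -(ler_nat R) natrD.
  have := part_lower_bounds_le_pack R col disj; rewrite natrD.
  lra.
have [k1 size1] := part_size_bounds n19 card_n k_le bound.
rewrite addnC in card_n; rewrite [X in (X <= _)%N]addnC in bound.
have [k2 size2] := part_size_bounds n19 card_n k_le bound.
by split; split.
Qed.
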